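(* Every $\Pi$-graph contains the Farey graph as a tight minor, i.e. as a minor all of whose branch sets are finite.
   Context: Graphs are simple and may be infinite. The Farey graph is the graph with vertex set $\mathbb{Q}\cup\{\infty\}$ in which two rationals $a/b$ and $c/d$ written in lowest terms (allowing $\infty=(\pm1)/0$) are adjacent if and only if $ad-bc=\pm1$. A graph is infinitely edge-connected if it has at least two vertices and $G-E'$ is connected for every finite set $E'$ of edges. Paths are independent if they are internally vertex-disjoint. A $\Pi$-graph is an infinitely edge-connected graph that does not contain infinitely many independent paths between any two of its vertices. A graph $H$ is a minor of $G$ if there are pairwise disjoint non-empty vertex sets $V_h\subseteq V(G)$ ($h\in V(H)$), each inducing a connected subgraph of $G$ (the branch sets), such that for every edge $hh'$ of $H$ there is an edge of $G$ between $V_h$ and $V_{h'}$. A tight minor is a minor in which all branch sets are finite. *)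

From mathcomp Require Import all_boot all_algebra.
From Stdlib Require List.
From Stdlib Require Import Relation_Operators.
Set Implicit Arguments. Unset Strict Implicit. Unset Printing Implicit Defensive.
Import GRing.Theory Num.Theory.

Definition simple_graph (V : Type) (adj : V -> V -> Prop) : Prop :=
  (forall x y, adj x y -> adj y x) /\ (forall x, ~ adj x x).

(* ---------- Farey graph on Q ∪ {∞} = option rat (None = ∞ = 1/0) ---------- *)
Definition farey_num (q : option rat) : int :=
  match q with Some r => numq r | None => 1%R end.
Definition farey_den (q : option rat) : int :=
  match q with Some r => denq r | None => 0%R end.
Definition farey_adj (p q : option rat) : Prop :=
  let d := (farey_num p * farey_den q - farey_den p * farey_num q)%R in
  d = 1%R \/ d = (-1)%R.

Definition del_edges (V : Type) (adj : V -> V -> Prop) (E : list (V * V))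
  (x y : V) : Prop :=
  adj x y /\ ~ (List.In (x, y) E \/ List.In (y, x) E).

Definition connected (V : Type) (r : V -> V -> Prop) : Prop :=
  forall x y : V, clos_refl_trans V r x y.

Definition inf_edge_connected (V : Type) (adj : V -> V -> Prop) : Prop :=
  (exists x y : V, x <> y) /\
  forall E : list (V * V), connected (del_edges adj E).

Fixpoint walk (V : Type) (adj : V -> V -> Prop) (x : V) (l : list V) : Prop :=
  match l with
  | nil => True
  | y :: l' => adj x y /\ walk adj y l'
  end.

(* u :: l is a u–v path in the graph *)
Definition uv_path (V : Type) (adj : V -> V -> Prop) (u v : V) (l : list V)
  : Prop :=
  walk adj u l /\ List.last (u :: l) u = v /\ List.NoDup (u :: l).

Definition internal (V : Type) (v : V) (l : list V) (x : V) : Prop :=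
  List.In x l /\ x <> v.

Definition inf_indep_paths (V : Type) (adj : V -> V -> Prop) (u v : V) : Prop :=
  exists P : nat -> list V,
    (forall i j, P i = P j -> i = j) /\
    (forall i, uv_path adj u v (P i)) /\
    (forall i j x, i <> j -> internal v (P i) x -> internal v (P j) x -> False).

Definition Pi_graph (V : Type) (adj : V -> V -> Prop) : Prop :=
  inf_edge_connected adj /\ forall u v : V, ~ inf_indep_paths adj u v.

Definition is_minor (H V : Type) (hadj : H -> H -> Prop) (adj : V -> V -> Prop)
  (B : H -> V -> Prop) : Prop :=
  (forall h, exists x, B h x) /\
  (forall h h' x, h <> h' -> B h x -> B h' x -> False) /\
  (forall h x y, B h x -> B h y ->
     clos_refl_trans V (fun a b => adj a b /\ B h a /\ B h b) x y) /\
  (forall h h', hadj h h' -> exists x y, B h x /\ B h' y /\ adj x y).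

Definition tight_minor (H V : Type) (hadj : H -> H -> Prop)
  (adj : V -> V -> Prop) : Prop :=
  exists B : H -> V -> Prop,
    is_minor hadj adj B /\
    forall h, exists l : list V, forall x, B h x -> List.In x l.

From Stdlib Require Import ZArith Lia List Classical ClassicalEpsilon.
From Stdlib Require Import Relation_Operators Operators_Properties.

(* In a Pi-graph finite vertex sets solve every separation problem: if no finite set met
   all u-v paths, choosing paths greedily would give infinitely many independent ones.
   Call a configuration a component C of G - W that sends infinitely many edges to each of
   two disjoint finite sets A, B of W and only finitely many to the rest of W. Finite
   separators and infinite edge-connectivity let us split any configuration: there is a
   finite connected Z in C adjacent to A and to B, and two disjoint components of C - Z
   that are configurations for (A, Z) and for (Z, B). Iterating along the Stern-Brocot
   tree, the set Z created between the branch sets of Farey neighbours a/b and c/d is the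
   branch set of (a+c)/(b+d). Two disjoint configurations over the same pair of sets,
   which play the roles of 0 and infinity, carry the positive and the negative half of
   the Farey graph. *)

(** * Stern-Brocot arithmetic *)

(* A pair [(p, q)] stands for the fraction [p/q]; [(1, 0)] is infinity. A word
   [s : list bool] addresses a node of the Stern-Brocot tree, read from the
   root [1/1] downwards, [true] turning towards [0/1]. *)
Definition mediant (x y : nat * nat) : nat * nat := (fst x + fst y, snd x + snd y).

Definition shear (b : bool) (x : nat * nat) : nat * nat :=
  if b then (fst x, fst x + snd x) else (fst x + snd x, snd x).

Definition farey_pair_adj (x y : nat * nat) : Prop :=
  fst x * snd y = snd x * fst y + 1 \/ snd x * fst y = fst x * snd y + 1.

Definition sb_child (b : bool) (I : (nat * nat) * (nat * nat)) :=
  if b then (fst I, mediant (fst I) (snd I)) else (mediant (fst I) (snd I), snd I).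

Fixpoint sb_interval (s : list bool) : (nat * nat) * (nat * nat) :=
  match s with
  | nil => ((0, 1), (1, 0))
  | b :: s => (shear b (fst (sb_interval s)), shear b (snd (sb_interval s)))
  end.

Definition sb_node (s : list bool) : nat * nat :=
  mediant (fst (sb_interval s)) (snd (sb_interval s)).

Lemma shear_mediant b x y : shear b (mediant x y) = mediant (shear b x) (shear b y).
Proof. destruct b; unfold shear, mediant; simpl; f_equal; lia. Qed.

Lemma sb_node_cons b s : sb_node (b :: s) = shear b (sb_node s).
Proof. unfold sb_node; simpl. symmetry; apply shear_mediant. Qed.

Lemma sb_interval_snoc s b : sb_interval (s ++ b :: nil) = sb_child b (sb_interval s).
Proof.
  induction s as [|c s IH]; simpl.
  - destruct b; reflexivity.
  - rewrite IH. destruct b; unfold sb_child; simpl; rewrite shear_mediant; reflexivity.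
Qed.

Lemma sb_node_pos s : 1 <= fst (sb_node s) /\ 1 <= snd (sb_node s).
Proof.
  induction s as [|b s IH]; [simpl; lia|].
  rewrite sb_node_cons. destruct (sb_node s), b; simpl in *; lia.
Qed.

Lemma shear_inj b c x y : 1 <= fst x -> 1 <= snd x -> 1 <= fst y -> 1 <= snd y ->
  shear b x = shear c y -> b = c /\ x = y.
Proof.
  destruct x, y, b, c; simpl; intros; injection H3; intros; split; f_equal; lia.
Qed.

Lemma sb_node_inj s t : sb_node s = sb_node t -> s = t.
Proof.
  revert t; induction s as [|b s IH]; intros [|c t] E; auto;
    rewrite ?sb_node_cons in E.
  - pose proof (sb_node_pos t). destruct (sb_node t), c; simpl in *; injection E; lia.
  - pose proof (sb_node_pos s). destruct (sb_node s), b; simpl in *; injection E; lia.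
  - destruct (sb_node_pos s), (sb_node_pos t).
    destruct (shear_inj b c (sb_node s) (sb_node t)) as [-> E']; auto.
    rewrite (IH t E'); reflexivity.
Qed.

Lemma sb_interval_det s :
  snd (fst (sb_interval s)) * fst (snd (sb_interval s)) =
  fst (fst (sb_interval s)) * snd (snd (sb_interval s)) + 1.
Proof.
  induction s as [|b s IH]; [reflexivity|]; simpl.
  destruct (sb_interval s) as [[a1 a2] [b1 b2]]; simpl in *.
  destruct b; simpl; nia.
Qed.


(* Writing [(r,s) - (a,b)] as [k] times the mediant, the size bound forces [k = 0]. *)
Lemma unimodular_small_neighbour_Z a b c d r s :
  (0 <= a -> 0 <= b -> 0 <= c -> 0 <= d -> 0 <= r -> 0 <= s ->
   b * c = a * d + 1 -> (a + c) * s = (b + d) * r + 1 -> r + s < a + b + c + d ->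
   r = a /\ s = b)%Z.
Proof.
  intros Ha Hb Hc Hd Hr Hs Hdet H Hlt.
  assert (Hc1 : (1 <= c)%Z).
  { destruct (Z.eq_dec c 0) as [->|]; [|lia].
    assert (0 <= a * d)%Z by (apply Z.mul_nonneg_nonneg; lia). lia. }
  assert (Hone : ((a + c) * b - (b + d) * a = 1)%Z) by lia.
  assert (Hcross : ((a + c) * (s - b) = (b + d) * (r - a))%Z) by lia.
  set (k := (b * (r - a) - a * (s - b))%Z).
  assert (Hr' : (r - a = (a + c) * k)%Z).
  { unfold k. replace ((a + c) * (b * (r - a) - a * (s - b)))%Z
      with ((a + c) * b * (r - a) - a * ((a + c) * (s - b)))%Z by ring.
    rewrite Hcross.
    replace ((a + c) * b * (r - a) - a * ((b + d) * (r - a)))%Z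
      with ((r - a) * ((a + c) * b - (b + d) * a))%Z by ring.
    rewrite Hone. ring. }
  assert (Hs' : (s - b = (b + d) * k)%Z).
  { apply (Z.mul_reg_l _ _ (a + c)); [lia|]. rewrite Hcross, Hr'. ring. }
  destruct (Z.lt_trichotomy k 0) as [Hk|[Hk|Hk]].
  - assert ((a + c) * k <= (a + c) * -1)%Z by (apply Z.mul_le_mono_nonneg_l; lia). lia.
  - rewrite Hk in Hr', Hs'. lia.
  - assert ((a + c) * 1 <= (a + c) * k)%Z by (apply Z.mul_le_mono_nonneg_l; lia).
    assert ((b + d) * 1 <= (b + d) * k)%Z by (apply Z.mul_le_mono_nonneg_l; lia). lia.
Qed.

Lemma sb_small_neighbour_is_endpoint s x :
  farey_pair_adj (sb_node s) x -> fst x + snd x < fst (sb_node s) + snd (sb_node s) ->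
  x = fst (sb_interval s) \/ x = snd (sb_interval s).
Proof.
  unfold sb_node, farey_pair_adj. pose proof (sb_interval_det s) as Hdet.
  destruct (sb_interval s) as [[a b] [c d]], x as [r q]; simpl in *.
  intros [H|H] Hlt.
  - left. destruct (unimodular_small_neighbour_Z (Z.of_nat a) (Z.of_nat b) (Z.of_nat c)
      (Z.of_nat d) (Z.of_nat r) (Z.of_nat q)); try lia. f_equal; lia.
  - right. destruct (unimodular_small_neighbour_Z (Z.of_nat d) (Z.of_nat c) (Z.of_nat b)
      (Z.of_nat a) (Z.of_nat q) (Z.of_nat r)); try lia. f_equal; lia.
Qed.

Lemma farey_pair_adj_same_size x y : farey_pair_adj x y -> fst x + snd x = fst y + snd y ->
  (x = (0, 1) /\ y = (1, 0)) \/ (x = (1, 0) /\ y = (0, 1)).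
Proof.
  destruct x as [p q], y as [r s]; unfold farey_pair_adj; simpl; intros H E.
  assert (Hfactor : (Z.of_nat p * Z.of_nat s - Z.of_nat q * Z.of_nat r =
    (Z.of_nat p + Z.of_nat q) * (Z.of_nat p - Z.of_nat r))%Z).
  { replace (Z.of_nat s) with (Z.of_nat p + Z.of_nat q - Z.of_nat r)%Z by lia. ring. }
  assert (Hsize : (Z.of_nat p + Z.of_nat q = 1)%Z).
  { destruct H as [H|H].
    - apply (Z.eq_mul_1_nonneg _ (Z.of_nat p - Z.of_nat r)); lia.
    - apply (Z.eq_mul_1_nonneg _ (Z.of_nat r - Z.of_nat p)); lia. }
  destruct p as [|[|]], q as [|[|]]; try lia; [left|right]; split; f_equal; lia.
Qed.

Definition sb_fraction (p : nat * nat) : Prop := p = (0, 1) \/ p = (1, 0) \/ exists s, p = sb_node s.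

Definition sb_word (p : nat * nat) : list bool := epsilon (inhabits nil) (fun s => sb_node s = p).

Lemma sb_word_node s : sb_word (sb_node s) = s.
Proof.
  apply sb_node_inj. apply (epsilon_spec (inhabits nil) (fun t => sb_node t = sb_node s)).
  exists s; auto.
Qed.

Lemma sb_fraction_size p : sb_fraction p -> 1 <= fst p + snd p.
Proof. intros [->|[->|[s ->]]]; [simpl; lia|simpl; lia|]. pose proof (sb_node_pos s); lia. Qed.

(** * Components, cuts and finite separators *)

Section PiGraph.
Variable V : Type.
Variable adj : V -> V -> Prop.
Hypothesis adj_sym : forall x y, adj x y -> adj y x.
Hypothesis adj_irrefl : forall x, ~ adj x x.
Hypothesis inf_edge_conn : forall E : list (V * V), connected (del_edges adj E).
Hypothesis no_inf_paths : forall u v : V, ~ inf_indep_paths adj u v.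

Local Notation rtc := (clos_refl_trans V).

Definition in_list (L : list V) : V -> Prop := fun x => In x L.
Definition extend (W : V -> Prop) (Z : list V) : V -> Prop := fun z => W z \/ In z Z.
Definition adj_in (R : V -> Prop) (a b : V) : Prop := adj a b /\ R a /\ R b.

Definition connected_in (R : V -> Prop) : Prop := forall x y, R x -> R y -> rtc (adj_in R) x y.

Definition edge_cover (P Q : V -> Prop) (L : list V) : Prop :=
  forall u v, P u -> Q v -> adj u v -> In u L /\ In v L.
Definition fin_edges (P Q : V -> Prop) : Prop := exists L, edge_cover P Q L.
Definition inf_edges (P Q : V -> Prop) : Prop := ~ fin_edges P Q.

Definition component (X R : V -> Prop) : Prop :=
  (exists r, R r) /\ (forall x, R x -> ~ X x) /\ connected_in R /\
  (forall x y, R x -> adj x y -> R y \/ X y).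

Definition component_of (X : V -> Prop) (v : V) : V -> Prop :=
  rtc (fun a b => adj a b /\ ~ X a /\ ~ X b) v.

Lemma rtc_sym (R : V -> V -> Prop) : (forall a b, R a b -> R b a) ->
  forall x y, rtc R x y -> rtc R y x.
Proof. intros HR x y H; induction H; eauto using rt_step, rt_refl, rt_trans. Qed.

Lemma rtc_mono (R R' : V -> V -> Prop) : (forall a b, R a b -> R' a b) ->
  forall x y, rtc R x y -> rtc R' x y.
Proof. intros HR x y H; induction H; eauto using rt_step, rt_refl, rt_trans. Qed.

Lemma adj_in_sym R a b : adj_in R a b -> adj_in R b a.
Proof. unfold adj_in; intros (H1 & H2 & H3); auto. Qed.

Lemma adj_in_mono (R R' : V -> Prop) a b : (forall x, R x -> R' x) ->
  adj_in R a b -> adj_in R' a b.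
Proof. unfold adj_in; intros HR (H1 & H2 & H3); auto. Qed.

Lemma edge_cover_mono P Q P' Q' L L' : edge_cover P Q L ->
  (forall x, P' x -> P x) -> (forall x, Q' x -> Q x) -> incl L L' -> edge_cover P' Q' L'.
Proof. intros H HP HQ HL u v Hu Hv Ha. destruct (H u v); auto. Qed.

Lemma fin_edges_mono P Q P' Q' : fin_edges P Q ->
  (forall x, P' x -> P x) -> (forall x, Q' x -> Q x) -> fin_edges P' Q'.
Proof. intros [L H] HP HQ. exists L. eapply edge_cover_mono; eauto using incl_refl. Qed.

Lemma inf_edges_mono P Q P' Q' : inf_edges P' Q' ->
  (forall x, P' x -> P x) -> (forall x, Q' x -> Q x) -> inf_edges P Q.
Proof. intros H HP HQ H'. apply H. eapply fin_edges_mono; eauto. Qed.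

Lemma fin_edges_union P Q1 Q2 Q : fin_edges P Q1 -> fin_edges P Q2 ->
  (forall x, Q x -> Q1 x \/ Q2 x) -> fin_edges P Q.
Proof.
  intros [L1 H1] [L2 H2] HQ. exists (L1 ++ L2). intros u v Hu Hv Ha.
  destruct (HQ v Hv) as [Hv'|Hv'];
    [destruct (H1 u v) | destruct (H2 u v)]; auto; split; apply in_or_app; auto.
Qed.

Lemma fin_edges_nonadj P Q : (forall u v, P u -> Q v -> ~ adj u v) -> fin_edges P Q.
Proof. intros H. exists nil. intros u v Hu Hv Ha. exfalso; eapply H; eauto. Qed.

Lemma inf_edges_witness P Q : inf_edges P Q -> exists u v, P u /\ Q v /\ adj u v.
Proof.
  intros H. apply NNPP. intros Hn. apply H, fin_edges_nonadj. intros u v Hu Hv Ha.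
  apply Hn. eauto.
Qed.

Lemma list_choice {A : Type} (P : A -> list V -> Prop) (l : list A) :
  (forall a L L', P a L -> incl L L' -> P a L') ->
  (forall a, In a l -> exists L, P a L) ->
  exists L, forall a, In a l -> P a L.
Proof.
  intros Hm Hex. induction l as [|a l IH].
  - exists nil. intros a [].
  - destruct (Hex a (or_introl eq_refl)) as [L1 H1].
    destruct IH as [L2 H2]; [intros b Hb; apply Hex; right; auto|].
    exists (L1 ++ L2). intros b [<-|Hb]; eapply Hm; eauto using incl_appl, incl_appr, incl_refl.
Qed.

Lemma component_of_avoids X v y : ~ X v -> component_of X v y -> ~ X y.
Proof. intros Hv H. apply clos_rt_rtn1 in H. induction H; tauto. Qed.

Lemma component_of_component X v : ~ X v -> component X (component_of X v).
Proof.
  intros Hv.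
  assert (Hr : forall y, component_of X v y -> rtc (adj_in (component_of X v)) v y).
  { intros y H. pose proof H as H0. apply clos_rt_rtn1 in H. induction H as [|y z Hyz Hvy IH].
    - apply rt_refl.
    - apply rt_trans with y; [apply IH, clos_rtn1_rt; auto|].
      apply rt_step. destruct Hyz as (Ha & _). repeat split; auto. apply clos_rtn1_rt; auto. }
  split; [|split; [|split]].
  - exists v. apply rt_refl.
  - intros x. apply component_of_avoids; auto.
  - intros x y Hx Hy. apply rt_trans with v; auto. apply rtc_sym; auto. apply adj_in_sym.
  - intros x y Hx Ha. destruct (classic (X y)) as [H|H]; [right; auto|left].
    apply rt_trans with x; auto. apply rt_step. repeat split; auto.
    apply (component_of_avoids X v x Hv Hx).
Qed.

Lemma component_sub X X' R Q v : component X' R -> (forall z, X z -> X' z) -> component X Q ->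
  R v -> Q v -> forall x, R x -> Q x.
Proof.
  intros (_ & HR1 & HR2 & _) HX (_ & _ & _ & HQ3) Hv HQv x Hx.
  specialize (HR2 v x Hv Hx). apply clos_rt_rtn1 in HR2. induction HR2 as [|y z (Ha & Hy & Hz)]; auto.
  destruct (HQ3 y z) as [H|H]; auto. exfalso. apply (HR1 z Hz). auto.
Qed.

Lemma component_add_disjoint X Y R : component X R -> (forall y, Y y -> ~ R y) ->
  component (fun z => X z \/ Y z) R.
Proof.
  intros (H0 & H1 & H2 & H3) HY. split; [auto|split; [|split]]; auto.
  - intros x Hx [H|H]; [eapply H1 | eapply HY]; eauto.
  - intros x y Hx Ha. destruct (H3 x y) as [H|H]; auto.
Qed.

Lemma component_ext X X' R : component X R -> (forall z, X z <-> X' z) -> component X' R.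
Proof.
  intros (H0 & H1 & H2 & H3) HX. split; [auto|split; [|split]]; auto.
  - intros x Hx H. apply (H1 x Hx), HX; auto.
  - intros x y Hx Ha. destruct (H3 x y) as [H|H]; auto. right; apply HX; auto.
Qed.

(* Deleting the finitely many edges of a finite cut would disconnect [G]. *)
Lemma inf_edges_cut (S : V -> Prop) s t : S s -> ~ S t -> inf_edges S (fun v => ~ S v).
Proof.
  intros Hs Ht [L HL]. apply Ht.
  assert (Hclosed : forall x y, rtc (del_edges adj (list_prod L L)) x y -> S x -> S y).
  { intros x y Hxy. induction Hxy as [x y [Ha Hn]| |]; auto.
    intros Hx. apply NNPP. intros Hy. destruct (HL x y Hx Hy Ha).
    apply Hn. left. apply in_prod; auto. }
  exact (Hclosed s t (inf_edge_conn _ s t) Hs).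
Qed.

Lemma component_inf_edges X R t : component X R -> ~ R t -> inf_edges R X.
Proof.
  intros ([r Hr] & H1 & H2 & H3) Ht [L HL].
  apply (inf_edges_cut R r t Hr Ht). exists L. intros u v Hu Hv Ha.
  destruct (H3 u v Hu Ha) as [H|H]; [contradiction | apply HL; auto].
Qed.

Definition list_connected (L : list V) : Prop := connected_in (in_list L).

Lemma edge_list_connected a b : adj a b -> list_connected (a :: b :: nil).
Proof.
  intros Hab.
  assert (Hstep : adj_in (in_list (a :: b :: nil)) a b) by (repeat split; simpl; auto).
  intros x y [<-|[<-|[]]] [<-|[<-|[]]]; auto using rt_refl, rt_step.
  apply rt_step, adj_in_sym; auto.
Qed.

Lemma list_connected_app Z1 Z2 z : list_connected Z1 -> list_connected Z2 ->
  In z Z1 -> In z Z2 -> list_connected (Z1 ++ Z2).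
Proof.
  intros H1 H2 Hz1 Hz2.
  assert (Hsub : forall Z, incl Z (Z1 ++ Z2) -> forall x y,
            rtc (adj_in (in_list Z)) x y -> rtc (adj_in (in_list (Z1 ++ Z2))) x y).
  { intros Z HZ. apply rtc_mono. intros u w. apply adj_in_mono. exact HZ. }
  assert (Hz : forall x, In x (Z1 ++ Z2) -> rtc (adj_in (in_list (Z1 ++ Z2))) x z).
  { intros x Hx. destruct (in_app_or _ _ _ Hx);
      [apply (Hsub Z1) | apply (Hsub Z2)]; auto using incl_appl, incl_appr, incl_refl. }
  intros x y Hx Hy. apply rt_trans with z; auto. apply rtc_sym; auto. apply adj_in_sym.
Qed.

Lemma list_connected_pendants Z Y : list_connected Z ->
  (forall y, In y Y -> exists z, In z Z /\ adj y z) -> list_connected (Z ++ Y).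
Proof.
  intros HZ HY.
  assert (Hz : forall x, In x (Z ++ Y) ->
            exists z, In z Z /\ rtc (adj_in (in_list (Z ++ Y))) x z).
  { intros x Hx. destruct (in_app_or _ _ _ Hx) as [Hx'|Hx'].
    - exists x. split; [exact Hx'| apply rt_refl].
    - destruct (HY x Hx') as (z & Hz & Ha). exists z. split; [exact Hz|].
      apply rt_step. repeat split; auto. apply in_or_app; auto. }
  intros x y Hx Hy.
  destruct (Hz x Hx) as (zx & Hzx & Cx), (Hz y Hy) as (zy & Hzy & Cy).
  apply rt_trans with zx; auto. apply rt_trans with zy.
  - eapply rtc_mono; [|apply HZ; eauto]. intros u w. apply adj_in_mono. apply incl_appl, incl_refl.
  - apply rtc_sym; auto. apply adj_in_sym.
Qed.

Lemma rtc_list_connected C x y : rtc (adj_in C) x y -> C x ->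
  exists L, In x L /\ In y L /\ (forall z, In z L -> C z) /\ list_connected L.
Proof.
  intros H. induction H as [a b (Hab & Ha & Hb)|a|a b c _ IH1 _ IH2]; intros Ha'.
  - exists (a :: b :: nil). repeat split; simpl; auto.
    + intros z [<-|[<-|[]]]; auto.
    + apply edge_list_connected; auto.
  - exists (a :: nil). repeat split; simpl; auto.
    + intros z [<-|[]]; auto.
    + intros x y [<-|[]] [<-|[]]. apply rt_refl.
  - destruct (IH1 Ha') as (L1 & Ha1 & Hb1 & HC1 & Hc1).
    destruct (IH2 (HC1 b Hb1)) as (L2 & Hb2 & Hc2 & HC2 & Hc2').
    exists (L1 ++ L2). repeat split; auto using in_or_app.
    + intros z Hz. destruct (in_app_or _ _ _ Hz); auto.
    + apply (list_connected_app _ _ b); auto.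
Qed.

Lemma list_connected_spanning (C : V -> Prop) c0 M : connected_in C -> C c0 ->
  exists Z, In c0 Z /\ (forall z, In z Z -> C z) /\ (forall m, In m M -> C m -> In m Z) /\
    list_connected Z.
Proof.
  intros HC Hc0. induction M as [|m M (Z & H1 & H2 & H3 & H4)].
  - exists (c0 :: nil). repeat split; simpl; auto.
    + intros z [<-|[]]; auto.
    + intros x y [<-|[]] [<-|[]]. apply rt_refl.
  - destruct (classic (C m)) as [Hm|Hm].
    + destruct (rtc_list_connected C c0 m (HC c0 m Hc0 Hm) Hc0) as (L & HL0 & HLm & HLC & HL).
      exists (Z ++ L). repeat split; auto using in_or_app.
      * intros z Hz. destruct (in_app_or _ _ _ Hz); auto.
      * intros m' [<-|Hm'] Hc; apply in_or_app; auto.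
      * apply (list_connected_app _ _ c0); auto.
    + exists Z. repeat split; auto. intros m' [<-|Hm'] Hc; [contradiction|auto].
Qed.

Fixpoint chain (l : list V) : Prop :=
  match l with
  | x :: ((y :: _) as l') => adj x y /\ chain l'
  | _ => True
  end.

Lemma walk_chain u l : walk adj u l <-> chain (u :: l).
Proof.
  revert u; induction l as [|a l IH]; intros u; simpl; [tauto|].
  rewrite IH. destruct l; simpl; tauto.
Qed.

Lemma chain_suffix l1 l2 : chain (l1 ++ l2) -> chain l2.
Proof.
  induction l1 as [|a l1 IH]; simpl; auto. intros H. apply IH.
  destruct (l1 ++ l2); simpl in *; tauto.
Qed.

Lemma last_default_irrel (a : V) l d d' : last (a :: l) d = last (a :: l) d'.
Proof. revert a; induction l as [|b l IH]; intros a; [reflexivity|]. apply IH. Qed.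

Lemma last_app_cons l1 (x : V) l2 d : last (l1 ++ x :: l2) d = last (x :: l2) d.
Proof.
  induction l1 as [|a l1 IH]; [reflexivity|]. simpl app.
  destruct (l1 ++ x :: l2) eqn:E; [destruct l1; discriminate|]. exact IH.
Qed.

Lemma chain_snoc x p y : chain (x :: p) -> adj (last (x :: p) x) y -> chain ((x :: p) ++ y :: nil).
Proof.
  revert x; induction p as [|a p IH]; intros x H Hl; [simpl in *; auto|].
  destruct H as [H1 H2]. change (adj x a /\ chain ((a :: p) ++ y :: nil)). split; auto.
  apply (IH a H2). change (adj (last (a :: p) x) y) in Hl.
  rewrite (last_default_irrel a p a x). exact Hl.
Qed.

Lemma rtc_path R x y : rtc (adj_in R) x y -> R x ->
  exists p, chain (x :: p) /\ last (x :: p) x = y /\ NoDup (x :: p) /\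
            (forall z, In z (x :: p) -> R z).
Proof.
  intros H. apply clos_rt_rt1n in H. induction H as [x|x y z (Ha & _ & Hy) _ IH]; intros Hx.
  - exists nil. repeat split; simpl; auto using NoDup_cons, NoDup_nil.
    intros z [<-|[]]; auto.
  - destruct (IH Hy) as (p & H1 & H2 & H3 & H4).
    destruct (classic (In x (y :: p))) as [Hin|Hin].
    + destruct (in_split _ _ Hin) as (l1 & l2 & E). rewrite E in H1, H2, H3, H4.
      exists l2. repeat split.
      * apply (chain_suffix l1); auto.
      * rewrite (last_default_irrel x l2 x y), <- (last_app_cons l1); auto.
      * apply (NoDup_app_remove_l l1); auto.
      * intros w Hw. apply H4, in_or_app; auto.
    + exists (y :: p). repeat split; auto using NoDup_cons.
      * rewrite (last_default_irrel y p y x) in H2; auto.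
      * intros w [<-|Hw]; auto.
Qed.

Definition separates (L : list V) (u v : V) : Prop :=
  forall l, uv_path adj u v l -> (exists z, internal v l z) ->
    exists z, internal v l z /\ In z L.

Lemma separates_mono u v L L' : separates L u v -> incl L L' -> separates L' u v.
Proof. intros H HL l H1 H2. destruct (H l H1 H2) as (z & Hz & Hz'). eauto. Qed.

Fixpoint greedy_iterates (f : list V -> list V) (n : nat) : list (list V) :=
  match n with
  | O => nil
  | S n => greedy_iterates f n ++ f (concat (greedy_iterates f n)) :: nil
  end.

Lemma greedy_iterates_in f i j : i < j -> In (f (concat (greedy_iterates f i))) (greedy_iterates f j).
Proof.
  induction j as [|j IH]; intros H; [lia|]. simpl. apply in_or_app.
  destruct (PeanoNat.Nat.eq_dec i j) as [->|Hne]; [right; left; auto|left; apply IH; lia].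
Qed.

Lemma separator_exists u v : exists L, separates L u v.
Proof.
  apply NNPP. intros Hn.
  assert (H : forall L, exists l, uv_path adj u v l /\ (exists z, internal v l z) /\
                         forall z, internal v l z -> ~ In z L).
  { intros L. apply NNPP. intros H. apply Hn. exists L. intros l H1 H2.
    apply NNPP. intros H3. apply H. exists l. split; [auto|split; [auto|]].
    intros z Hz Hz'. apply H3. eauto. }
  destruct (choice _ H) as [f Hf].
  apply (no_inf_paths u v). exists (fun n => f (concat (greedy_iterates f n))).
  assert (Hkey : forall i j z, i < j -> internal v (f (concat (greedy_iterates f i))) z ->
                   ~ internal v (f (concat (greedy_iterates f j))) z).
  { intros i j z Hij Hi Hj. destruct (Hf (concat (greedy_iterates f j))) as (_ & _ & H3).
    apply (H3 z Hj), in_concat. exists (f (concat (greedy_iterates f i))).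
    split; [apply greedy_iterates_in; auto | apply Hi]. }
  split; [|split].
  - intros i j E. destruct (PeanoNat.Nat.lt_total i j) as [Hl|[Hl|Hl]]; auto; exfalso.
    + destruct (Hf (concat (greedy_iterates f i))) as (_ & [z Hz] & _).
      apply (Hkey i j z Hl Hz). rewrite <- E. auto.
    + destruct (Hf (concat (greedy_iterates f j))) as (_ & [z Hz] & _).
      apply (Hkey j i z Hl Hz). rewrite E. auto.
  - intros i. apply Hf.
  - intros i j x Hne Hi Hj. destruct (PeanoNat.Nat.lt_total i j) as [Hl|[Hl|Hl]].
    + exact (Hkey i j x Hl Hi Hj).
    + contradiction.
    + exact (Hkey j i x Hl Hj Hi).
Qed.

Lemma separators_exist (X Y : list V) :
  exists L, forall x, In x X -> forall y, In y Y -> separates L x y.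
Proof.
  apply (list_choice (fun x L => forall y, In y Y -> separates L x y) X).
  - intros x L L' H HL y Hy. eapply separates_mono; eauto.
  - intros x _. apply (list_choice (fun y L => separates L x y) Y).
    + intros y L L' H HL. eapply separates_mono; eauto.
    + intros y _. apply separator_exists.
Qed.

Lemma component_meets_separator K R x y r1 r2 L : x <> y -> K x -> K y -> component K R ->
  R r1 -> adj r1 x -> R r2 -> adj r2 y -> separates L x y -> exists z, In z L /\ R z.
Proof.
  intros Hxy Kx Ky (_ & HR1 & HR2 & _) H1 A1 H2 A2 HL.
  destruct (rtc_path R r1 r2 (HR2 r1 r2 H1 H2) H1) as (p & P1 & P2 & P3 & P4).
  set (l := (r1 :: p) ++ y :: nil).
  assert (Hl : uv_path adj x y l).
  { split; [|split].
    - apply walk_chain. simpl. split; auto. apply chain_snoc; auto. rewrite P2; auto.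
    - apply (last_last (x :: r1 :: p)).
    - constructor.
      + intros Hin. destruct (in_app_or _ _ _ Hin) as [Hin'|[E|[]]]; auto.
        apply (HR1 x (P4 x Hin')); auto.
      + apply NoDup_app; auto using NoDup_cons, NoDup_nil.
        intros z Hz [E|[]]. subst z. apply (HR1 y (P4 y Hz)); auto. }
  destruct (HL l Hl) as (z & (Hz1 & Hz2) & Hz3).
  { exists r1. split; [left; auto|]. intros E. subst r1. apply (HR1 y H1); auto. }
  exists z. split; auto. destruct (in_app_or _ _ _ Hz1) as [Hz1'|[E|[]]]; auto. congruence.
Qed.

Lemma component_edge_covers K T (Lr : list V) : exists M, forall r, In r Lr ->
  forall R, component K R -> R r -> fin_edges R T -> edge_cover R T M.
Proof.
  apply (list_choice (fun r M => forall R, component K R -> R r -> fin_edges R T -> edge_cover R T M)).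
  - intros r L L' H HL R H1 H2 H3. eapply edge_cover_mono; eauto.
  - intros r _. destruct (classic (exists R0, component K R0 /\ R0 r /\ fin_edges R0 T))
      as [(R0 & H1 & H2 & [L HL])|Hn].
    + exists L. intros R HR Hr _. eapply edge_cover_mono; eauto using incl_refl.
      intros x Hx. apply (component_sub K K R R0 r); auto.
    + exists nil. intros R HR Hr Hf. exfalso. eauto.
Qed.

Lemma fin_edges_union_l P1 P2 P Q : fin_edges P1 Q -> fin_edges P2 Q ->
  (forall x, P x -> P1 x \/ P2 x) -> fin_edges P Q.
Proof.
  intros [L1 H1] [L2 H2] HP. exists (L1 ++ L2). intros u v Hu Hv Ha.
  destruct (HP u Hu) as [Hu'|Hu'];
    [destruct (H1 u v) | destruct (H2 u v)]; auto; split; apply in_or_app; auto.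
Qed.

Section VertexSplit.
Variables (W Q : V -> Prop) (A : list V) (q : V).
Hypothesis Q_comp : component W Q.
Hypothesis A_in_W : forall a, In a A -> W a.
Hypothesis q_in_Q : Q q.
Hypothesis Q_rest_fin : fin_edges Q (fun w => W w /\ ~ In w A).

Local Notation K := (fun z => W z \/ z = q).

Lemma q_not_in_W : ~ W q.
Proof. destruct Q_comp as (_ & HQ1 & _). apply HQ1, q_in_Q. Qed.

Lemma subcomponent_adjacent_A R : component K R -> (forall v, R v -> Q v) ->
  fin_edges R (fun v => v = q) -> exists r a, R r /\ In a A /\ adj r a.
Proof.
  intros HR HRQ Hq. apply NNPP. intros Hn. apply (component_inf_edges K R q HR).
  - intros Hq'. apply (proj1 (proj2 HR) q Hq'). right; auto.
  - apply (fin_edges_union R (fun w => W w /\ ~ In w A)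
             (fun w => in_list A w \/ w = q)).
    + apply (fin_edges_mono _ _ _ _ Q_rest_fin); auto.
    + apply (fin_edges_union _ (in_list A) (fun w => w = q)); auto.
      apply fin_edges_nonadj. intros r a Hr Ha Hra. apply Hn. eauto.
    + intros w [Hw|Hw]; [|right; right; auto].
      destruct (classic (In w A)); [right; left | left]; auto.
Qed.

Lemma separator_A_q : exists Ls, forall R, component K R ->
  (exists r a, R r /\ In a A /\ adj r a) -> (exists r, R r /\ adj r q) ->
  exists z, In z Ls /\ R z.
Proof.
  destruct (separators_exist A (q :: nil)) as [Ls HLs]. exists Ls.
  intros R HR (r1 & a & Hr1 & Ha & Hra) (r2 & Hr2 & Hrq).
  apply (component_meets_separator K R a q r1 r2); auto; [|apply HLs; simpl; auto].
  intros E. subst a. apply q_not_in_W, A_in_W; auto.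
Qed.

Definition q_side (v : V) : Prop :=
  v = q \/ exists R, component K R /\ (forall x, R x -> Q x) /\ R v /\ inf_edges R (fun x => x = q).

Lemma q_side_edges_at_q : fin_edges (fun u => u = q) (fun v => ~ q_side v).
Proof.
  destruct Q_rest_fin as [Lw HLw].
  destruct separator_A_q as [Ls HLs].
  destruct (component_edge_covers K (fun v => v = q) Ls) as [M HM].
  exists (q :: A ++ Lw ++ M). intros u v -> Hv Huv.
  assert (Hvq : v <> q) by (intros E; apply Hv; left; auto).
  destruct (classic (W v)) as [HWv|HWv]; [destruct (classic (In v A)) as [HvA|HvA]|].
  - simpl; rewrite !in_app_iff; tauto.
  - destruct (HLw q v q_in_Q (conj HWv HvA) Huv). simpl; rewrite !in_app_iff; tauto.
  - assert (HKv : ~ K v) by tauto.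
    pose proof (component_of_component K v HKv) as HR.
    assert (HRv : component_of K v v) by apply rt_refl.
    assert (HRQ : forall x, component_of K v x -> Q x).
    { apply (component_sub W K (component_of K v) Q v); auto.
      destruct (proj2 (proj2 (proj2 Q_comp)) q v q_in_Q Huv); tauto. }
    assert (HfinR : fin_edges (component_of K v) (fun x => x = q)).
    { apply NNPP. intros H. apply Hv. right. exists (component_of K v). auto. }
    destruct (HLs _ HR) as (z & Hz & HRz).
    { apply subcomponent_adjacent_A; auto. }
    { exists v. auto. }
    destruct (HM z Hz _ HR HRz HfinR v q HRv eq_refl (adj_sym _ _ Huv)).
    simpl; rewrite !in_app_iff; tauto.
Qed.

Lemma q_side_edges_off_q :
  (forall R, component K R -> (forall v, R v -> Q v) ->
     fin_edges R (in_list A) \/ fin_edges R (fun v => v = q)) ->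
  fin_edges (fun u => exists R, component K R /\ (forall x, R x -> Q x) /\ R u /\
                        inf_edges R (fun x => x = q))
            (fun v => ~ q_side v).
Proof.
  intros Hcase. destruct Q_rest_fin as [Lw HLw].
  destruct separator_A_q as [Ls HLs].
  destruct (component_edge_covers K (in_list A) Ls) as [M HM].
  exists (Lw ++ M). intros u v (R & HR & HRQ & HRu & HRq) Hv Huv.
  assert (Hvq : v <> q) by (intros E; apply Hv; left; auto).
  destruct (classic (W v)) as [HWv|HWv]; [destruct (classic (In v A)) as [HvA|HvA]|].
  - assert (HRA : fin_edges R (in_list A)) by (destruct (Hcase R HR HRQ); [auto|contradiction]).
    destruct (HLs R HR) as (z & Hz & HRz).
    { exists u, v. auto. }
    { destruct (inf_edges_witness _ _ HRq) as (r & q' & Hr & -> & Hrq). eauto. }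
    destruct (HM z Hz R HR HRz HRA u v HRu HvA Huv). rewrite !in_app_iff; tauto.
  - destruct (HLw u v (HRQ u HRu) (conj HWv HvA) Huv). rewrite !in_app_iff; tauto.
  - exfalso. apply Hv. right. exists R. split; [exact HR|split; [exact HRQ|split; [|exact HRq]]].
    destruct (proj2 (proj2 (proj2 HR)) u v HRu Huv) as [H|[H|H]]; tauto.
Qed.

End VertexSplit.

(* If every subcomponent of [Q] saw only finitely many edges to [A] or to [q], then [q]
   and the subcomponents seeing [q] infinitely often would form a finite cut. *)
Lemma split_at_vertex W Q A q : component W Q -> (forall a, In a A -> W a) -> Q q ->
  inf_edges Q (in_list A) -> fin_edges Q (fun w => W w /\ ~ In w A) ->
  exists R, component (fun z => W z \/ z = q) R /\ (forall v, R v -> Q v) /\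
            inf_edges R (in_list A) /\ inf_edges R (fun v => v = q).
Proof.
  intros HQ HAW Hq HQA HQrest. apply NNPP. intros Hn.
  assert (Hcase : forall R, component (fun z => W z \/ z = q) R -> (forall v, R v -> Q v) ->
            fin_edges R (in_list A) \/ fin_edges R (fun v => v = q)).
  { intros R HR HRQ. apply NNPP. intros H. apply Hn. exists R.
    split; [exact HR|split; [exact HRQ|split]]; intros H'; apply H; auto. }
  destruct (inf_edges_witness _ _ HQA) as (_ & a0 & _ & Ha0 & _).
  apply (inf_edges_cut (q_side W Q q) q a0); [left; auto| |].
  - intros [E|(R & (_ & HR1 & _) & _ & HRa & _)].
    + subst a0. apply (q_not_in_W W Q q); auto.
    + apply (HR1 a0 HRa). left; auto.
  - apply (fin_edges_union_l _ _ _ _ (q_side_edges_at_q W Q A q HQ HAW Hq HQrest)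
             (q_side_edges_off_q W Q A q HQ HAW Hq HQrest Hcase)); auto.
Qed.

(** * Splitting configurations *)

Definition config (W : V -> Prop) (A B : list V) (C : V -> Prop) : Prop :=
  (forall x, In x A -> W x) /\ (forall x, In x B -> W x) /\ (forall x, In x A -> ~ In x B) /\
  component W C /\ inf_edges C (in_list A) /\ inf_edges C (in_list B) /\
  fin_edges C (fun w => W w /\ ~ In w A /\ ~ In w B).

Ltac split_config := split; [|split; [|split; [|split; [|split; [|split]]]]].

Lemma config_sym W A B C : config W A B C -> config W B A C.
Proof.
  intros (H1 & H2 & H3 & H4 & H5 & H6 & H7). split_config; auto.
  - intros x Hx Hx'. apply (H3 x); auto.
  - apply (fin_edges_mono _ _ _ _ H7); tauto.
Qed.

Lemma config_ext W W' A B C : config W A B C -> (forall z, W z <-> W' z) -> config W' A B C.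
Proof.
  intros (H1 & H2 & H3 & H4 & H5 & H6 & H7) HW. split_config; auto; try (intros; apply HW; auto).
  - apply (component_ext _ _ _ H4 HW).
  - apply (fin_edges_mono _ _ _ _ H7); auto. intros w (Hw & ?); apply HW in Hw; tauto.
Qed.

Lemma config_extend_side W A B C Y : config W A B C -> (forall y, In y Y -> ~ C y) ->
  (forall a, In a A -> ~ In a Y) -> config (extend W Y) A (B ++ Y) C.
Proof.
  intros (H1 & H2 & H3 & H4 & H5 & H6 & H7) HYC HAY. unfold extend.
  split_config; auto.
  - intros x Hx. destruct (in_app_or _ _ _ Hx); auto.
  - intros x Hx Hx'. destruct (in_app_or _ _ _ Hx'); [apply (H3 x) | apply (HAY x)]; auto.
  - apply component_add_disjoint; auto.
  - apply (inf_edges_mono _ _ _ _ H6); auto. intros x Hx. apply in_or_app; auto.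
  - apply (fin_edges_mono _ _ _ _ H7); auto.
    intros w ([Hw|Hw] & HwA & HwB); rewrite in_app_iff in HwB; tauto.
Qed.

Lemma rtc_exit (C R : V -> Prop) r z : rtc (adj_in C) r z -> R r -> ~ R z ->
  exists u w, R u /\ ~ R w /\ C w /\ adj u w.
Proof.
  intros H. apply clos_rt_rt1n in H. induction H as [x|x y z (Ha & _ & Hy') _ IH]; intros Hx Hz.
  - contradiction.
  - destruct (classic (R y)) as [Hy|Hy]; auto. exists x, y. auto.
Qed.

Lemma component_of_sub W X C c : component W C -> (forall z, W z -> X z) -> C c -> ~ X c ->
  forall v, component_of X c v -> C v.
Proof.
  intros HC HWX Hc HXc. apply (component_sub W X _ C c); auto.
  - apply component_of_component; auto.
  - apply rt_refl.
Qed.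

Section Subcomponents.
Variables (W C : V -> Prop) (Z0 : list V) (c0 : V).
Hypothesis C_comp : component W C.
Hypothesis Z0_in_C : forall z, In z Z0 -> C z.
Hypothesis c0_in_Z0 : In c0 Z0.

Local Notation K := (extend W Z0).

Lemma subcomponent_adjacent_Z0 R : component K R -> (forall v, R v -> C v) ->
  exists r z, R r /\ In z Z0 /\ adj r z.
Proof.
  destruct C_comp as (_ & HC1 & HC2 & _).
  intros ([r Hr] & HR1 & _ & HR3) HRC.
  destruct (rtc_exit C R r c0 (HC2 r c0 (HRC r Hr) (Z0_in_C c0 c0_in_Z0)) Hr)
    as (u & w & Hu & Hw & HCw & Huw).
  { intros H. apply (HR1 c0 H). right; auto. }
  exists u, w. repeat split; auto.
  destruct (HR3 u w Hu Huw) as [H|[H|H]]; [contradiction | exfalso; apply (HC1 w); auto | auto].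
Qed.

Lemma separator_for_subcomponents T : (forall t, In t T -> W t) ->
  exists Ls, forall R, component K R -> (forall v, R v -> C v) ->
    (exists r t, R r /\ In t T /\ adj r t) -> exists z, In z Ls /\ R z.
Proof.
  intros HTW. destruct (separators_exist T Z0) as [Ls HLs]. exists Ls.
  intros R HR HRC (r1 & t & Hr1 & Ht & Hrt).
  destruct (subcomponent_adjacent_Z0 R HR HRC) as (r2 & z & Hr2 & Hz & Hrz).
  apply (component_meets_separator K R t z r1 r2); auto.
  - intros E; subst. apply (proj1 (proj2 C_comp) z); auto.
  - left; auto.
  - right; auto.
Qed.

(* Edges from [C] to [T] leave either from the finite set [Z0] or from a subcomponent;
   subcomponents adjacent to [T] meet the finite separator, so finitely many of them
   would each carry only finitely many such edges. *)
Lemma subcomponent_inf_edges T : (forall t, In t T -> W t) -> inf_edges C (in_list T) ->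
  exists Q, component K Q /\ (forall v, Q v -> C v) /\ inf_edges Q (in_list T).
Proof.
  intros HTW HCT. apply NNPP. intros Hn.
  destruct (separator_for_subcomponents T HTW) as [Ls HLs].
  destruct (component_edge_covers K (in_list T) Ls) as [M HM].
  apply HCT. exists (Z0 ++ T ++ M). intros c t Hc Ht Hct.
  destruct (classic (In c Z0)) as [Hz|Hz]; [rewrite !in_app_iff; tauto|].
  assert (HKc : ~ K c) by (intros [H|H]; [apply (proj1 (proj2 C_comp) c) | ]; auto).
  pose proof (component_of_component K c HKc) as HR.
  pose proof (component_of_sub W K C c C_comp (fun z H => or_introl H) Hc HKc) as HRC.
  destruct (HLs _ HR HRC) as (z & Hz1 & Hz2). { exists c, t. split; auto. apply rt_refl. }
  assert (Hf : fin_edges (component_of K c) (in_list T)).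
  { apply NNPP. intros H. apply Hn. exists (component_of K c). auto. }
  destruct (HM z Hz1 _ HR Hz2 Hf c t (rt_refl _ _ _) Ht Hct). rewrite !in_app_iff; tauto.
Qed.

End Subcomponents.

Lemma refine_component K Q A Z0 : component K Q -> (forall a, In a A -> K a) ->
  (forall z, In z Z0 -> K z) -> (forall a, In a A -> ~ In a Z0) -> inf_edges Q (in_list A) ->
  fin_edges Q (fun w => K w /\ ~ In w A /\ ~ In w Z0) -> (exists q z, Q q /\ In z Z0 /\ adj q z) ->
  exists Y R, (forall y, In y Y -> Q y) /\ (forall y, In y Y -> exists z, In z Z0 /\ adj y z) /\
    (forall v, R v -> Q v) /\ config (extend K Y) A (Z0 ++ Y) R.
Proof.
  intros HQ HA HZ HAZ HQA HQf (q & z & Hq & Hz & Hqz).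
  assert (HqK : ~ K q) by (apply (proj1 (proj2 HQ)); auto).
  destruct (classic (fin_edges Q (in_list Z0))) as [Hfin|Hinf].
  - destruct (split_at_vertex K Q A q HQ HA Hq HQA) as (R & HR & HRQ & HRA & HRq).
    { apply (fin_edges_union _ _ _ _ HQf Hfin). intros w [Hw1 Hw2].
      destruct (classic (In w Z0)); [right | left]; auto. }
    exists (q :: nil), R. split; [|split; [|split]].
    + intros y [<-|[]]; auto.
    + intros y [<-|[]]; eauto.
    + auto.
    + unfold extend. split_config.
      * intros a Ha; left; auto.
      * intros y Hy. rewrite in_app_iff in Hy.
        destruct Hy as [Hy|[<-|[]]]; [left; auto | right; left; auto].
      * intros a Ha Hy. rewrite in_app_iff in Hy. destruct Hy as [Hy|[<-|[]]].
        -- apply (HAZ a); auto.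
        -- apply HqK, HA; auto.
      * apply (component_ext _ _ R HR). intros w. simpl. intuition.
      * auto.
      * apply (inf_edges_mono _ _ _ _ HRq); auto. intros x ->. apply in_or_app. right; left; auto.
      * apply (fin_edges_mono _ _ _ _ HQf); auto.
        intros w ([Hw|[<-|[]]] & HwA & HwZ); rewrite in_app_iff in HwZ; simpl in HwZ; tauto.
  - exists nil, Q. split; [|split; [|split]]; auto; try (intros y []).
    rewrite app_nil_r. unfold extend. split_config; simpl; auto.
    + apply (component_ext _ _ Q HQ). intros w. tauto.
    + apply (fin_edges_mono _ _ _ _ HQf); auto. intros w ([Hw|[]] & ?). auto.
Qed.

Definition config_splits (W : V -> Prop) (A B : list V) (C : V -> Prop)
    (Z : list V) (R1 R2 : V -> Prop) : Prop :=
  Z <> nil /\ (forall z, In z Z -> C z) /\ list_connected Z /\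
  (exists z a, In z Z /\ In a A /\ adj z a) /\ (exists z b, In z Z /\ In b B /\ adj z b) /\
  config (extend W Z) A Z R1 /\ config (extend W Z) Z B R2 /\
  (forall v, R1 v -> C v) /\ (forall v, R2 v -> C v) /\ (forall v, R1 v -> R2 v -> False).

Lemma subcomponent_one_sided W A B C Z0 Ls : config W A B C ->
  (forall a, In a A -> forall b, In b B -> separates Ls a b) ->
  (forall z, In z Ls -> C z -> In z Z0) ->
  forall R, component (extend W Z0) R -> (forall v, R v -> C v) ->
  (exists r a, R r /\ In a A /\ adj r a) -> (exists r b, R r /\ In b B /\ adj r b) -> False.
Proof.
  intros (HAW & HBW & HAB & _) HLs HLZ R HR HRC (r1 & a & Hr1 & Ha & Hra) (r2 & b & Hr2 & Hb & Hrb).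
  destruct (component_meets_separator (extend W Z0) R a b r1 r2 Ls) as (z & Hz & HRz); auto.
  - intros E; subst; apply (HAB b); auto.
  - left; auto.
  - left; auto.
  - apply (proj1 (proj2 HR) z HRz). right. apply HLZ; auto.
Qed.

Lemma refine_side W A B C Z Q : config W A B C -> (forall z, In z Z -> C z) ->
  component (extend W Z) Q -> (forall v, Q v -> C v) -> inf_edges Q (in_list A) ->
  (forall r b, Q r -> In b B -> ~ adj r b) -> (exists r z, Q r /\ In z Z /\ adj r z) ->
  exists Y R, (forall y, In y Y -> Q y) /\ (forall y, In y Y -> exists z, In z Z /\ adj y z) /\
    (forall v, R v -> Q v) /\ config (extend (extend W Z) Y) A (Z ++ Y) R.
Proof.
  intros (HAW & _ & _ & (_ & HC1 & _) & _ & _ & HCrest) HZC HQ HQC HQA HQB HQZ.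
  apply refine_component; auto.
  - intros a Ha. left; auto.
  - intros z Hz. right; auto.
  - intros a Ha Hz. apply (HC1 a); auto.
  - apply (fin_edges_union _ _ _ _ (fin_edges_mono _ _ _ _ HCrest HQC (fun w H => H))
      (fin_edges_nonadj _ (in_list B) HQB)).
    intros w ([Hw|Hw] & HwA & HwZ); [|contradiction].
    destruct (classic (In w B)); [right | left]; auto.
Qed.

Lemma config_split_of_sides W A B C Z0 Q1 Q2 : config W A B C ->
  Z0 <> nil -> (forall z, In z Z0 -> C z) -> list_connected Z0 ->
  (exists z a, In z Z0 /\ In a A /\ adj z a) -> (exists z b, In z Z0 /\ In b B /\ adj z b) ->
  component (extend W Z0) Q1 -> (forall v, Q1 v -> C v) -> inf_edges Q1 (in_list A) ->
  (forall r b, Q1 r -> In b B -> ~ adj r b) ->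
  component (extend W Z0) Q2 -> (forall v, Q2 v -> C v) -> inf_edges Q2 (in_list B) ->
  (forall r a, Q2 r -> In a A -> ~ adj r a) ->
  exists Z R1 R2, config_splits W A B C Z R1 R2.
Proof.
  intros HI HZn HZC HZconn (c0 & a0 & Hc0 & Ha0 & Hc0a) HZB HQ1 HQ1C HQ1A HQ1B HQ2 HQ2C HQ2B HQ2A.
  pose proof HI as (HAW & _ & _ & HC & _).
  assert (Hdisj : forall v, Q1 v -> Q2 v -> False).
  { intros v H1 H2. destruct (inf_edges_witness _ _ HQ2B) as (u & b & Hu & Hb & Hub).
    apply (HQ1B u b); auto. apply (component_sub _ _ Q2 Q1 v HQ2 (fun z H => H)); auto. }
  destruct (refine_side W A B C Z0 Q1) as (Y1 & R1 & HY1Q & HY1adj & HR1Q & HR1); auto.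
  { apply (subcomponent_adjacent_Z0 W C Z0 c0); auto. }
  destruct (refine_side W B A C (Z0 ++ Y1) Q2) as (Y2 & R2 & HY2Q & HY2adj & HR2Q & HR2);
    auto using config_sym.
  { intros z Hz. destruct (in_app_or _ _ _ Hz); auto. }
  { apply (component_ext (fun z => extend W Z0 z \/ In z Y1)).
    - apply component_add_disjoint; auto. intros y Hy H2. apply (Hdisj y); auto.
    - intros z. unfold extend. rewrite in_app_iff. tauto. }
  { destruct (subcomponent_adjacent_Z0 W C Z0 c0 HC HZC Hc0 Q2 HQ2 HQ2C) as (r & z & Hr & Hz & Hrz).
    exists r, z. rewrite in_app_iff. auto. }
  set (Z := (Z0 ++ Y1) ++ Y2).
  assert (HWZ1 : forall z, extend (extend (extend W Z0) Y1) Y2 z <-> extend W Z z).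
  { intros z. unfold Z, extend. rewrite !in_app_iff. tauto. }
  assert (HWZ2 : forall z, extend (extend W (Z0 ++ Y1)) Y2 z <-> extend W Z z).
  { intros z. unfold Z, extend. rewrite !in_app_iff. tauto. }
  exists Z, R1, R2.
  split; [|split; [|split; [|split; [|split; [|split; [|split; [|split; [|split]]]]]]]].
  - destruct Z0; [contradiction | discriminate].
  - intros z Hz. unfold Z in Hz. rewrite !in_app_iff in Hz. destruct Hz as [[Hz|Hz]|Hz]; auto.
  - apply list_connected_pendants; [apply list_connected_pendants; auto|].
    intros y Hy. destruct (HY2adj y Hy) as (z & Hz & Hyz). eauto.
  - exists c0, a0. unfold Z. rewrite !in_app_iff. auto.
  - destruct HZB as (z & b & Hz & Hb & Hzb). exists z, b. unfold Z. rewrite !in_app_iff. auto.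
  - refine (config_ext _ _ _ _ _ (config_extend_side _ _ _ _ Y2 HR1 _ _) HWZ1).
    + intros y Hy H1. apply (Hdisj y); auto.
    + intros a Ha Hy. apply (proj1 (proj2 HC) a); auto.
  - apply config_sym, (config_ext _ _ _ _ _ HR2 HWZ2).
  - auto.
  - auto.
  - intros v H1 H2. apply (Hdisj v); auto.
Qed.

Lemma config_split W A B C : config W A B C -> exists Z R1 R2, config_splits W A B C Z R1 R2.
Proof.
  intros HI. pose proof HI as (HAW & HBW & HAB & HC & HCA & HCB & _).
  destruct (separators_exist A B) as [Ls HLs].
  destruct (inf_edges_witness _ _ HCA) as (ca & a0 & Hca & Ha0 & Hcaa).
  destruct (inf_edges_witness _ _ HCB) as (cb & b0 & Hcb & Hb0 & Hcbb).
  destruct (list_connected_spanning C ca (cb :: Ls) (proj1 (proj2 (proj2 HC))) Hca)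
    as (Z0 & HZ0a & HZ0C & HZ0L & HZ0conn).
  destruct (subcomponent_inf_edges W C Z0 ca HC HZ0C HZ0a A HAW HCA) as (Q1 & HQ1 & HQ1C & HQ1A).
  destruct (subcomponent_inf_edges W C Z0 ca HC HZ0C HZ0a B HBW HCB) as (Q2 & HQ2 & HQ2C & HQ2B).
  pose proof (subcomponent_one_sided W A B C Z0 Ls HI HLs (fun z Hz => HZ0L z (or_intror Hz)))
    as Hone.
  apply (config_split_of_sides W A B C Z0 Q1 Q2); auto.
  - intros E. rewrite E in HZ0a. contradiction.
  - exists ca, a0. auto.
  - exists cb, b0. split; auto. apply HZ0L; [left|]; auto.
  - intros r b Hr Hb Hrb. apply (Hone Q1); eauto.
    destruct (inf_edges_witness _ _ HQ1A) as (u & a & Hu & Ha & Hua). eauto.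
  - intros r a Hr Ha Hra. apply (Hone Q2); eauto.
    destruct (inf_edges_witness _ _ HQ2B) as (u & b & Hu & Hb & Hub). eauto.
Qed.

Lemma config_widen W A A' B C : config W A B C -> incl A A' -> (forall x, In x A' -> W x) ->
  (forall x, In x A' -> ~ In x B) -> config W A' B C.
Proof.
  intros (H1 & H2 & H3 & H4 & H5 & H6 & H7) HAA' HA'W HA'B. split_config; auto.
  - exact (inf_edges_mono _ _ _ _ H5 (fun x H => H) HAA').
  - apply (fin_edges_mono _ _ _ _ H7); auto. intros w (Hw & HwA & HwB).
    repeat split; auto.
Qed.

Lemma rtc_neq_step (R : V -> V -> Prop) u v : rtc R u v -> u <> v -> exists a b, R a b.
Proof.
  intros H. induction H as [a b Hab|a|a b c _ IH1 _ IH2]; intros Hne; eauto.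
  - contradiction.
  - destruct (classic (a = b)) as [->|E]; auto.
Qed.

Lemma edge_component x y : adj x y ->
  exists R, config (fun z => z = x \/ z = y) (x :: nil) (y :: nil) R.
Proof.
  intros Hxy. set (K := fun z : V => z = x).
  assert (HKy : ~ K y) by (intros E; unfold K in E; subst; apply (adj_irrefl x); auto).
  pose proof (component_of_component K y HKy) as HQ.
  assert (HQx : ~ component_of K y x) by (intros H; apply (proj1 (proj2 HQ) x H); reflexivity).
  destruct (split_at_vertex K (component_of K y) (x :: nil) y HQ) as (R & HR & HRQ & HRx & HRy).
  - intros a [<-|[]]. reflexivity.
  - apply rt_refl.
  - apply (inf_edges_mono _ _ _ _ (component_inf_edges K _ x HQ HQx)); auto.
    intros w Hw. left; auto.
  - apply fin_edges_nonadj. intros r w _ (Hw & HwA) _. apply HwA. left; auto.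
  - exists R. split_config; auto.
    + intros a [<-|[]]. left; auto.
    + intros a [<-|[]]. right; auto.
    + intros a [<-|[]] [E|[]]. subst. apply HKy. reflexivity.
    + apply (inf_edges_mono _ _ _ _ HRy); auto. intros w ->. left; auto.
    + apply fin_edges_nonadj. intros r w _ ([Hw|Hw] & HwA & HwB) _;
        [apply HwA | apply HwB]; left; auto.
Qed.

Lemma initial_configs : (exists u v : V, u <> v) ->
  exists W A B Cp Cm, config W B A Cp /\ config W B A Cm /\ (forall v, Cp v -> Cm v -> False) /\
    A <> nil /\ B <> nil /\ list_connected A /\ list_connected B /\
    (exists x y, In x A /\ In y B /\ adj x y).
Proof.
  intros (u & v & Huv).
  destruct (rtc_neq_step _ u v (inf_edge_conn nil u v) Huv) as (x & y & [Hxy _]).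
  destruct (edge_component x y Hxy) as (R & HI).
  destruct (config_split _ _ _ _ HI)
    as (Z & R1 & R2 & HZn & HZC & HZconn & (z & a & Hz & [<-|[]] & Hza) & _ & HI1 & HI2 & _ & _ & H12).
  assert (HZxy : forall w, In w (x :: y :: nil) -> ~ In w Z).
  { intros w Hw HwZ. apply (proj1 (proj2 (proj1 (proj2 (proj2 (proj2 HI))))) w (HZC w HwZ)).
    destruct Hw as [<-|[<-|[]]]; auto. }
  assert (HxyW : forall w, In w (x :: y :: nil) -> extend (fun z => z = x \/ z = y) Z w).
  { intros w [<-|[<-|[]]]; left; auto. }
  exists (extend (fun z => z = x \/ z = y) Z), (x :: y :: nil), Z, R1, R2.
  split; [|split; [|split; [|split; [|split; [|split; [|split]]]]]].
  - apply config_sym, (config_widen _ (x :: nil)); auto. intros w [<-|[]]; left; auto.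
  - apply config_sym, (config_widen _ _ _ _ _ (config_sym _ _ _ _ HI2)); auto.
    intros w [<-|[]]; right; left; auto.
  - auto.
  - discriminate.
  - auto.
  - apply edge_list_connected; auto.
  - auto.
  - exists x, z. split; [left|]; auto.
Qed.

(** * The tree of splittings *)

Record node := Node { nW : V -> Prop; nL : list V; nR : list V; nC : V -> Prop }.
Record splitting := Splitting { sZ : list V; sR1 : V -> Prop; sR2 : V -> Prop }.

Definition node_config (n : node) : Prop := config (nW n) (nL n) (nR n) (nC n).

Definition node_splits (n : node) (o : splitting) : Prop :=
  config_splits (nW n) (nL n) (nR n) (nC n) (sZ o) (sR1 o) (sR2 o).

Lemma node_split_exists n : exists o, node_config n -> node_splits n o.
Proof.
  destruct (classic (node_config n)) as [H|H].
  - destruct (config_split _ _ _ _ H) as (Z & R1 & R2 & HS). exists (Splitting Z R1 R2). auto.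
  - exists (Splitting nil (fun _ => False) (fun _ => False)). contradiction.
Qed.

Definition split_of (n : node) : splitting :=
  proj1_sig (constructive_indefinite_description _ (node_split_exists n)).

Lemma split_of_spec n : node_config n -> node_splits n (split_of n).
Proof. unfold split_of. destruct (constructive_indefinite_description _ _); auto. Qed.

(* [true] keeps the left side, as [sb_child true] keeps the left endpoint. *)
Definition child (b : bool) (n : node) : node :=
  let o := split_of n in
  if b then Node (extend (nW n) (sZ o)) (nL n) (sZ o) (sR1 o)
  else Node (extend (nW n) (sZ o)) (sZ o) (nR n) (sR2 o).

Fixpoint descend (n : node) (s : list bool) : node :=
  match s with nil => n | b :: s' => descend (child b n) s' end.

Definition tree_set (n : node) (s : list bool) : list V := sZ (split_of (descend n s)).

Lemma child_config b n : node_config n -> node_config (child b n).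
Proof.
  intros H. destruct (split_of_spec n H) as (_ & _ & _ & _ & _ & H1 & H2 & _).
  destruct b; auto.
Qed.

Lemma descend_config n s : node_config n -> node_config (descend n s).
Proof. revert n; induction s as [|b s IH]; intros n H; simpl; auto using child_config. Qed.

Lemma child_sub b n v : node_config n -> nC (child b n) v -> nC n v.
Proof.
  intros H. destruct (split_of_spec n H) as (_ & _ & _ & _ & _ & _ & _ & H1 & H2 & _).
  destruct b; simpl; auto.
Qed.

Lemma descend_sub n s v : node_config n -> nC (descend n s) v -> nC n v.
Proof.
  revert n; induction s as [|b s IH]; intros n H Hv; simpl in *; auto.
  apply (child_sub b); auto. apply IH; auto using child_config.
Qed.

Lemma child_avoids_split b n v : node_config n -> nC (child b n) v -> ~ In v (sZ (split_of n)).
Proof.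
  intros H Hv Hz. destruct (child_config b n H) as (_ & _ & _ & (_ & HC1 & _) & _).
  apply (HC1 v Hv). destruct b; right; auto.
Qed.

Lemma children_disjoint n v : node_config n -> nC (child true n) v -> nC (child false n) v -> False.
Proof.
  intros H. destruct (split_of_spec n H) as (_ & _ & _ & _ & _ & _ & _ & _ & _ & H1). apply H1.
Qed.

Lemma tree_set_sub n s z : node_config n -> In z (tree_set n s) -> nC (descend n s) z.
Proof. intros H. apply (split_of_spec _ (descend_config n s H)). Qed.

Lemma tree_set_sub_root n s z : node_config n -> In z (tree_set n s) -> nC n z.
Proof. intros H Hz. apply (descend_sub n s); auto. apply tree_set_sub; auto. Qed.

Lemma tree_set_disjoint n s t v : node_config n -> s <> t ->
  In v (tree_set n s) -> In v (tree_set n t) -> False.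
Proof.
  revert n t; induction s as [|b s IH]; intros n [|c t] H Hne Hs Ht; [contradiction| | |].
  - apply (child_avoids_split c n v H); auto.
    apply (tree_set_sub_root _ t); auto using child_config.
  - apply (child_avoids_split b n v H); auto.
    apply (tree_set_sub_root _ s); auto using child_config.
  - destruct (Bool.bool_dec b c) as [<-|Hbc].
    + apply (IH (child b n) t); auto using child_config. intros E; subst; auto.
    + assert (H1 : nC (child b n) v) by (apply (tree_set_sub_root _ s); auto using child_config).
      assert (H2 : nC (child c n) v) by (apply (tree_set_sub_root _ t); auto using child_config).
      destruct b, c; try congruence; eapply children_disjoint; eauto.
Qed.

Lemma descend_snoc n s b : descend n (s ++ b :: nil) = child b (descend n s).
Proof. revert n; induction s as [|c s IH]; intros n; simpl; auto. Qed.

Definition branch_set (n : node) (p : nat * nat) : list V :=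
  if (Nat.eqb (fst p) 0 && Nat.eqb (snd p) 1)%bool then nL n
  else if (Nat.eqb (fst p) 1 && Nat.eqb (snd p) 0)%bool then nR n
  else tree_set n (sb_word p).

Lemma branch_set_node n s : branch_set n (sb_node s) = tree_set n s.
Proof.
  unfold branch_set. pose proof (sb_node_pos s) as [H1 H2].
  destruct (sb_node s) as [m1 m2] eqn:E; simpl in *.
  destruct (Nat.eqb m1 0) eqn:E1; [apply PeanoNat.Nat.eqb_eq in E1; lia|].
  destruct (Nat.eqb m2 0) eqn:E2; [apply PeanoNat.Nat.eqb_eq in E2; lia|].
  rewrite Bool.andb_false_r. simpl. rewrite <- E, sb_word_node. reflexivity.
Qed.

Lemma descend_sides n s :
  nL (descend n s) = branch_set n (fst (sb_interval s)) /\
  nR (descend n s) = branch_set n (snd (sb_interval s)).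
Proof.
  induction s as [|b s [IHL IHR]] using rev_ind; [split; reflexivity|].
  rewrite descend_snoc, sb_interval_snoc.
  assert (Hmid : sZ (split_of (descend n s)) =
                 branch_set n (mediant (fst (sb_interval s)) (snd (sb_interval s)))).
  { fold (sb_node s). rewrite branch_set_node. reflexivity. }
  destruct b; simpl; auto.
Qed.

(* A fraction adjacent to a smaller one is the mediant of its neighbour and the
   other end of its interval, so the edge was created when its node was split. *)
Lemma branch_set_adj_smaller n s q : node_config n -> farey_pair_adj (sb_node s) q ->
  fst q + snd q < fst (sb_node s) + snd (sb_node s) ->
  exists x y, In x (branch_set n (sb_node s)) /\ In y (branch_set n q) /\ adj x y.
Proof.
  intros HI Hadj Hlt. rewrite branch_set_node.
  destruct (descend_sides n s) as [HL HR].
  destruct (split_of_spec _ (descend_config n s HI))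
    as (_ & _ & _ & (z & a & Hz & Ha & Hza) & (z' & b & Hz' & Hb & Hzb) & _).
  destruct (sb_small_neighbour_is_endpoint s q Hadj Hlt) as [->| ->].
  - exists z, a. rewrite <- HL. auto.
  - exists z', b. rewrite <- HR. auto.
Qed.

Lemma branch_set_adj n p q : node_config n ->
  (exists x y, In x (nR n) /\ In y (nL n) /\ adj x y) ->
  sb_fraction p -> sb_fraction q -> farey_pair_adj p q ->
  exists x y, In x (branch_set n p) /\ In y (branch_set n q) /\ adj x y.
Proof.
  intros HI Hroot Hp Hq Hd.
  pose proof (sb_fraction_size p Hp). pose proof (sb_fraction_size q Hq).
  destruct (PeanoNat.Nat.lt_total (fst q + snd q) (fst p + snd p)) as [Hlt|[Heq|Hgt]].
  - destruct Hp as [->|[->|[s ->]]]; [simpl in Hlt; lia|simpl in Hlt; lia|].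
    apply branch_set_adj_smaller; auto.
  - destruct (farey_pair_adj_same_size p q Hd (eq_sym Heq)) as [[-> ->]|[-> ->]];
      destruct Hroot as (x & y & Hx & Hy & Hxy); unfold branch_set; simpl.
    + exists y, x. auto.
    + exists x, y. auto.
  - destruct Hq as [->|[->|[s ->]]]; [simpl in Hgt; lia|simpl in Hgt; lia|].
    destruct (branch_set_adj_smaller n s p HI) as (x & y & Hx & Hy & Hxy); auto.
    + unfold farey_pair_adj in *. lia.
    + exists y, x. auto.
Qed.

Lemma branch_set_connected n p : node_config n -> sb_fraction p ->
  nL n <> nil -> nR n <> nil -> list_connected (nL n) -> list_connected (nR n) ->
  branch_set n p <> nil /\ list_connected (branch_set n p).
Proof.
  intros HI Hp HL HR CL CR. destruct Hp as [->|[->|[s ->]]]; [auto|auto|].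
  rewrite branch_set_node.
  destruct (split_of_spec _ (descend_config n s HI)) as (H1 & _ & H2 & _). auto.
Qed.

Lemma branch_set_disjoint n p q v : node_config n -> sb_fraction p -> sb_fraction q -> p <> q ->
  In v (branch_set n p) -> In v (branch_set n q) -> False.
Proof.
  intros HI Hp Hq Hne Hvp Hvq.
  pose proof HI as (HLW & HRW & HLR & (_ & HC1 & _) & _).
  assert (HZ : forall s, In v (tree_set n s) -> In v (nL n) \/ In v (nR n) -> False).
  { intros s Hs [H|H]; apply (HC1 v); auto; apply (tree_set_sub_root n s v); auto. }
  destruct Hp as [->|[->|[s ->]]]; destruct Hq as [->|[->|[t ->]]];
    rewrite ?branch_set_node in *;
    change (branch_set n (0, 1)) with (nL n) in *; change (branch_set n (1, 0)) with (nR n) in *;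
    try congruence; try (eapply HLR; eauto; fail); eauto.
  apply (tree_set_disjoint n s t v); auto. intros E; subst; auto.
Qed.

Theorem sb_branch_sets : (exists u v : V, u <> v) ->
  exists Br : bool -> nat * nat -> list V,
    (forall p, p = (0, 1) \/ p = (1, 0) -> Br true p = Br false p) /\
    (forall b p, sb_fraction p -> Br b p <> nil /\ list_connected (Br b p)) /\
    (forall b p q x, sb_fraction p -> sb_fraction q -> p <> q ->
       In x (Br b p) -> In x (Br b q) -> False) /\
    (forall s t x, In x (Br true (sb_node s)) -> In x (Br false (sb_node t)) -> False) /\
    (forall b p q, sb_fraction p -> sb_fraction q -> farey_pair_adj p q ->
       exists x y, In x (Br b p) /\ In y (Br b q) /\ adj x y).
Proof.
  intros Hex.
  destruct (initial_configs Hex) as (W & A & B & Cp & Cm & Hp & Hm & Hpm & HA & HB & CA & CB & HAB).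
  set (root := fun b : bool => Node W B A (if b then Cm else Cp)).
  assert (Hroot : forall b, node_config (root b)) by (intros []; assumption).
  exists (fun b => branch_set (root b)).
  split; [|split; [|split; [|split]]].
  - intros p [-> | ->]; reflexivity.
  - intros b p Hp'. apply branch_set_connected; auto.
  - intros b p q x. apply branch_set_disjoint; auto.
  - intros s t x Hs Ht. rewrite branch_set_node in Hs, Ht.
    apply (Hpm x); [apply (tree_set_sub_root (root false) t) | apply (tree_set_sub_root (root true) s)];
      auto.
  - intros b p q. apply branch_set_adj; auto.
Qed.

End PiGraph.

(** * Farey encoding *)

From mathcomp Require Import all_boot all_algebra zify.
Import GRing.Theory Num.Theory.

Lemma sb_node_surj n p q : (p + q <= n)%N -> (0 < p)%N -> (0 < q)%N -> coprime p q ->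
  exists s, sb_node s = (p, q).
Proof.
  elim: n p q => [|n IH] p q Hn Hp Hq Hc; first by lia.
  case: (ltngtP p q) => Hpq.
  - have Hc' : coprime p (q - p) by move: Hc; rewrite /coprime -{1}(subnKC (ltnW Hpq)) gcdnDl.
    have [s Hs] : exists s, sb_node s = (p, q - p)%N by apply: IH => //; lia.
    exists (true :: s). rewrite sb_node_cons Hs /shear /=. congr (_, _); lia.
  - have Hc' : coprime (p - q) q.
    { by move: Hc; rewrite coprime_sym /coprime -{1}(subnKC (ltnW Hpq)) gcdnDl gcdnC. }
    have [s Hs] : exists s, sb_node s = (p - q, q)%N by apply: IH => //; lia.
    exists (false :: s). rewrite sb_node_cons Hs /shear /=. congr (_, _); lia.
  - subst q. move: Hc; rewrite /coprime gcdnn => /eqP ->. by exists nil.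
Qed.

Local Open Scope ring_scope.

(* The sign of [h] is dropped here and recorded by [farey_neg]: the negative rationals
   live in a second copy of the Stern-Brocot tree. *)
Definition farey_pair (h : option rat) : nat * nat :=
  if h is Some u then (`|numq u|%N, `|denq u|%N) else (1%N, 0%N).
Definition farey_neg (h : option rat) : bool := if h is Some u then u < 0 else false.
Definition farey_pos (h : option rat) : bool := if h is Some u then 0 < u else false.

Lemma farey_den_pair h : farey_den h = ((farey_pair h).2)%:Z.
Proof. case: h => [u|] //=. by rewrite gtz0_abs ?denq_gt0. Qed.

Lemma farey_num_pair h :
  farey_num h = if farey_neg h then - ((farey_pair h).1)%:Z else ((farey_pair h).1)%:Z.
Proof.
  case: h => [u|] //=. case: ifP => Hu.
  - by rewrite ltz0_abs ?opprK // numq_lt0.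
  - by rewrite gez0_abs // numq_ge0; case: ltrgt0P Hu.
Qed.

Lemma farey_pair_pos h : farey_pos h || farey_neg h ->
  (0 < (farey_pair h).1)%N /\ (0 < (farey_pair h).2)%N.
Proof.
  case: h => [u|] //= Hu. split; last by rewrite absz_gt0 denq_neq0.
  by rewrite absz_gt0 numq_eq0; case: ltrgt0P Hu.
Qed.

Lemma farey_pair_ends h : ~~ farey_pos h -> ~~ farey_neg h ->
  farey_pair h = (0%N, 1%N) \/ farey_pair h = (1%N, 0%N).
Proof. case: h => [u|] /=; last by right. by case: ltrgt0P => // -> _ _; left. Qed.

Lemma farey_pair_node h : farey_pos h || farey_neg h -> exists s, farey_pair h = sb_node s.
Proof.
  move=> Hh. have [H1 H2] := farey_pair_pos h Hh.
  case: h Hh H1 H2 => [u|] //= _ H1 H2.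
  have [s Hs] := sb_node_surj _ _ _ (leqnn _) H1 H2 (coprime_num_den u).
  by exists s; rewrite Hs.
Qed.

Lemma farey_pair_sb h : sb_fraction (farey_pair h).
Proof.
  case Hh: (farey_pos h || farey_neg h).
  - right; right. exact: farey_pair_node h Hh.
  - move/negbT: Hh; rewrite negb_or => /andP [H1 H2].
    by case: (farey_pair_ends h H1 H2) => ->; [left | right; left].
Qed.

Lemma farey_pos_neg h : farey_pos h -> ~~ farey_neg h.
Proof. by case: h => [u|] //=; case: ltrgt0P. Qed.

Lemma farey_adj_pair h h' : farey_adj h h' ->
  (farey_neg h -> ~~ farey_pos h') /\ (farey_pos h -> ~~ farey_neg h') /\
  farey_pair_adj (farey_pair h) (farey_pair h').
Proof.
  rewrite /farey_adj !farey_num_pair !farey_den_pair /farey_pair_adj.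
  have cases k : (farey_pos k /\ ~~ farey_neg k /\ (0 < (farey_pair k).1)%N /\ (0 < (farey_pair k).2)%N) \/
    (~~ farey_pos k /\ farey_neg k /\ (0 < (farey_pair k).1)%N /\ (0 < (farey_pair k).2)%N) \/
    (~~ farey_pos k /\ ~~ farey_neg k /\
     (farey_pair k = (0%N, 1%N) \/ farey_pair k = (1%N, 0%N))).
  { case Hp: (farey_pos k); case Hn: (farey_neg k).
    - by move: (farey_pos_neg k Hp); rewrite Hn.
    - by left; have := farey_pair_pos k; rewrite Hp => /(_ isT) [].
    - by right; left; have := farey_pair_pos k; rewrite Hn orbT => /(_ isT) [].
    - by right; right; do 2 split => //; apply: farey_pair_ends; rewrite ?Hp ?Hn. }
  have := cases h; have := cases h'.
  case: (farey_pair h) => [p q]; case: (farey_pair h') => [r s] /=.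
  move=> [[-> [/negbTE -> [H1 H2]]]|[[/negbTE -> [-> [H1 H2]]]|[/negbTE -> [/negbTE -> [[-> ->]|[-> ->]]]]]];
  move=> [[-> [/negbTE -> [H3 H4]]]|[[/negbTE -> [-> [H3 H4]]]|[/negbTE -> [/negbTE -> [[-> ->]|[-> ->]]]]]];
  simpl; intros H; (repeat split; try done); nia.
Qed.

Lemma farey_pair_inj h h' : h <> h' -> farey_neg h = farey_neg h' -> farey_pair h <> farey_pair h'.
Proof.
  move=> Hne Hs E. apply: Hne.
  have Hn : farey_num h = farey_num h' by rewrite !farey_num_pair Hs E.
  have Hd : farey_den h = farey_den h' by rewrite !farey_den_pair E.
  move: Hn Hd; case: h h' {Hs E} => [u|] [v|] //= Hn Hd.
  - by rewrite -[u]divq_num_den -[v]divq_num_den Hn Hd.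
  - by move: (denq_gt0 u); rewrite Hd.
  - by move: (denq_gt0 v); rewrite -Hd.
Qed.

Lemma farey_pair_nonzero_end h h' : farey_pos h || farey_neg h ->
  ~~ farey_pos h' -> ~~ farey_neg h' -> farey_pair h <> farey_pair h'.
Proof.
  move=> Hh Hp Hn E. have [H1 H2] := farey_pair_pos h Hh.
  by case: (farey_pair_ends h' Hp Hn) => E'; rewrite E E' in H1 H2.
Qed.

Section FareyMinor.
Variables (V : Type) (adj : V -> V -> Prop) (Br : bool -> nat * nat -> list V).
Hypothesis Br_ends : forall p, p = (0, 1)%N \/ p = (1, 0)%N -> Br true p = Br false p.
Hypothesis Br_conn : forall b p, sb_fraction p -> Br b p <> nil /\ list_connected V adj (Br b p).
Hypothesis Br_disj : forall b p q x, sb_fraction p -> sb_fraction q -> p <> q ->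
  In x (Br b p) -> In x (Br b q) -> False.
Hypothesis Br_cross : forall s t x, In x (Br true (sb_node s)) -> In x (Br false (sb_node t)) -> False.
Hypothesis Br_adj : forall b p q, sb_fraction p -> sb_fraction q -> farey_pair_adj p q ->
  exists x y, In x (Br b p) /\ In y (Br b q) /\ adj x y.

Definition farey_branch (h : option rat) : list V := Br (farey_neg h) (farey_pair h).

(* Zero and infinity have the same branch set in both halves. *)
Lemma farey_branch_as b h : farey_neg h = b \/ ~~ farey_pos h && ~~ farey_neg h ->
  farey_branch h = Br b (farey_pair h).
Proof.
  case=> [<- // | /andP [Hp Hn]]. rewrite /farey_branch (negbTE Hn).
  by case: b => //; symmetry; apply: Br_ends; apply: farey_pair_ends.
Qed.

Lemma farey_branch_cross h h' x : farey_neg h -> farey_pos h' ->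
  In x (farey_branch h) -> In x (farey_branch h') -> False.
Proof.
  move=> Hn Hp. rewrite /farey_branch Hn (negbTE (farey_pos_neg h' Hp)).
  have [s ->] := farey_pair_node h (introT orP (or_intror Hn)).
  have [t ->] := farey_pair_node h' (introT orP (or_introl Hp)).
  exact: Br_cross.
Qed.

Lemma farey_branch_disjoint_signs h h' x : farey_neg h -> ~~ farey_neg h' ->
  In x (farey_branch h) -> In x (farey_branch h') -> False.
Proof.
  move=> Hn Hn'. case Hp': (farey_pos h'); first exact: farey_branch_cross.
  rewrite (farey_branch_as true h') ?Hp' ?Hn' /farey_branch ?Hn; last by right.
  apply: (Br_disj _ _ _ _ (farey_pair_sb h) (farey_pair_sb h')).
  by apply: farey_pair_nonzero_end; rewrite ?Hn ?orbT ?Hp'.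
Qed.

Lemma farey_branch_disjoint h h' x : h <> h' ->
  In x (farey_branch h) -> In x (farey_branch h') -> False.
Proof.
  move=> Hne. case Hn: (farey_neg h); case Hn': (farey_neg h').
  - rewrite /farey_branch Hn Hn'.
    apply: (Br_disj _ _ _ _ (farey_pair_sb h) (farey_pair_sb h')).
    by apply: farey_pair_inj; rewrite ?Hn ?Hn'.
  - by apply: farey_branch_disjoint_signs; rewrite ?Hn ?Hn'.
  - by move=> Hx Hx'; apply: (farey_branch_disjoint_signs h' h x); rewrite ?Hn ?Hn'.
  - rewrite /farey_branch Hn Hn'.
    apply: (Br_disj _ _ _ _ (farey_pair_sb h) (farey_pair_sb h')).
    by apply: farey_pair_inj; rewrite ?Hn ?Hn'.
Qed.

Lemma farey_branch_adj h h' : farey_adj h h' ->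
  exists x y, In x (farey_branch h) /\ In y (farey_branch h') /\ adj x y.
Proof.
  move=> Hhh'. have [Hneg [Hpos Hd]] := farey_adj_pair h h' Hhh'.
  have Hside k k' : (farey_neg k' -> ~~ farey_pos k) ->
    farey_neg k = farey_neg k || farey_neg k' \/ ~~ farey_pos k && ~~ farey_neg k.
  { move=> Hkk'. case Hk: (farey_neg k); first by left.
    case Hk': (farey_neg k'); last by left. by right; rewrite Hkk'. }
  rewrite (farey_branch_as (farey_neg h || farey_neg h') h).
  - rewrite (farey_branch_as (farey_neg h || farey_neg h') h').
    + exact: Br_adj (farey_pair_sb h) (farey_pair_sb h') Hd.
    + by rewrite orbC; apply: Hside.
  - apply: Hside => Hn'. by apply/negP => /Hpos; rewrite Hn'.
Qed.

Lemma farey_tight_minor : tight_minor farey_adj adj.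
Proof.
  exists (fun h x => In x (farey_branch h)). split; last by move=> h; exists (farey_branch h).
  split; [|split; [|split]].
  - move=> h. have [Hne _] := Br_conn (farey_neg h) _ (farey_pair_sb h).
    rewrite /farey_branch. case: (Br _ _) Hne => [|x l] // _. by exists x; left.
  - move=> h h' x Hne. exact: farey_branch_disjoint.
  - move=> h x y Hx Hy. exact: (proj2 (Br_conn _ _ (farey_pair_sb h)) x y Hx Hy).
  - move=> h h'. exact: farey_branch_adj.
Qed.

End FareyMinor.

Theorem theorem2 (V : Type) (adj : V -> V -> Prop) :
  simple_graph adj -> Pi_graph adj -> tight_minor farey_adj adj.
Proof.
  move=> [Hsym Hirr] [[Hex Hiec] Hpi].
  have [Br [Hends [Hconn [Hdisj [Hcross Hadj]]]]] := sb_branch_sets V adj Hsym Hirr Hiec Hpi Hex.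
  exact: (farey_tight_minor V adj Br Hends Hconn Hdisj Hcross Hadj).
Qed.
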